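(* Let $p_N(x)=\prod_{i=1}^N(x-z_i)$ with $z_1,\dots,z_N\in\mathbb{C}$ pairwise distinct, and let $\omega_N=\{x_1,\dots,x_N\}\subset\mathbb{S}^2$ with $\pi_{\mathbb{S}^2}(x_i)=z_i$. Then $$\mathcal{E}_{\log}(\omega_N)-\sum_{i=1}^N\log\mu_{\rm norm}(p_N,z_i)=-N\log\Big(\frac{\sqrt{N(N+1)}}{2}\Big)-N\log\Big(\Big(\int_{\mathbb{S}^2}\prod_{j=1}^N|p-x_j|^2\,d\sigma(p)\Big)^{1/2}\Big),$$ where $\sigma$ is the surface measure on $\mathbb{S}^2$ normalized so that $\sigma(\mathbb{S}^2)=1$.
   Context: $\mathbb{S}^2$ is the unit sphere in $\mathbb{R}^3$; $\pi_{\mathbb{S}^2}(a,b,c)=\frac{a+ib}{1-c}$. $\mathcal{E}_{\log}(\{x_1,\dots,x_N\})=-\sum_{i\ne j}\log\|x_i-x_j\|$. For a root $z$ of a degree-$N$ polynomial $P$, $\mu_{\rm norm}(P,z)=N^{1/2}\|P\|(1+|z|^2)^{N/2-1}/|P'(z)|$, where $\|\sum_{i=0}^N a_iz^i\|=(\sum_i\binom{N}{i}^{-1}|a_i|^2)^{1/2}$ is the Bombieri–Weyl norm. *)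

From Stdlib Require Import Reals Lra List ClassicalEpsilon.
Open Scope R_scope.

Definition Cx : Type := (R * R)%type.
Definition C0 : Cx := (0, 0).
Definition C1 : Cx := (1, 0).
Definition Cadd (u v : Cx) : Cx := (fst u + fst v, snd u + snd v).
Definition Csub (u v : Cx) : Cx := (fst u - fst v, snd u - snd v).
Definition Cmul (u v : Cx) : Cx :=
  (fst u * fst v - snd u * snd v, fst u * snd v + snd u * fst v).
Definition Cscale (r : R) (u : Cx) : Cx := (r * fst u, r * snd u).
Definition Cnorm2 (u : Cx) : R := fst u ^ 2 + snd u ^ 2.
Definition Cnorm (u : Cx) : R := sqrt (Cnorm2 u).

Fixpoint rsum (n : nat) (f : nat -> R) : R :=
  match n with O => 0 | S m => rsum m f + f m end.

(* ---------- univariate complex polynomials as coefficient lists,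
   lowest degree first: [a_0; a_1; ...; a_N] ---------- *)
Definition Peval (p : list Cx) (z : Cx) : Cx :=
  fold_right (fun a acc => Cadd a (Cmul z acc)) C0 p.

Fixpoint mulXsub_aux (z prev : Cx) (c : list Cx) : list Cx :=
  match c with
  | nil => prev :: nil
  | a :: c' => Csub prev (Cmul z a) :: mulXsub_aux z a c'
  end.
Definition mulXsub (z : Cx) (c : list Cx) : list Cx := mulXsub_aux z C0 c.

Fixpoint prod_roots (N : nat) (z : nat -> Cx) : list Cx :=
  match N with O => C1 :: nil | S m => mulXsub (z m) (prod_roots m z) end.

Fixpoint deriv_aux (k : nat) (c : list Cx) : list Cx :=
  match c with nil => nil | a :: c' => Cscale (INR k) a :: deriv_aux (S k) c' end.
Definition Pderiv (p : list Cx) : list Cx := deriv_aux 1 (tl p).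

Definition bw_norm (N : nat) (p : list Cx) : R :=
  sqrt (rsum (S N) (fun i => Cnorm2 (nth i p C0) / Binomial.C N i)).

Definition mu_norm (N : nat) (P : list Cx) (z : Cx) : R :=
  sqrt (INR N) * bw_norm N P * Rpower (1 + Cnorm2 z) (INR N / 2 - 1)
  / Cnorm (Peval (Pderiv P) z).

Definition R3 : Type := (R * R * R)%type.
Definition on_sphere (x : R3) : Prop :=
  let '(a, b, c) := x in a ^ 2 + b ^ 2 + c ^ 2 = 1.
Definition dist3 (x y : R3) : R :=
  let '(a, b, c) := x in let '(a', b', c') := y in
  sqrt ((a - a') ^ 2 + (b - b') ^ 2 + (c - c') ^ 2).
Definition stereo (x : R3) : Cx :=
  let '(a, b, c) := x in (a / (1 - c), b / (1 - c)).

Definition E_log (N : nat) (x : nat -> R3) : R :=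
  - rsum N (fun i => rsum N (fun j =>
        if Nat.eqb i j then 0 else ln (dist3 (x i) (x j)))).

(* Riemann integral made total (value when f is Riemann integrable on [a,b]) *)
Definition RInt (f : R -> R) (a b : R) : R :=
  epsilon (inhabits 0)
    (fun I => exists pr : Riemann_integrable f a b, RiemannInt pr = I).

(* integral over S^2 w.r.t. the normalized surface measure sigma,
   via spherical coordinates (area element sin(theta) dtheta dphi, total 4 PI) *)
Definition sph (theta phi : R) : R3 :=
  (sin theta * cos phi, sin theta * sin phi, cos theta).
Definition sphere_int (f : R3 -> R) : R :=
  / (4 * PI) *
  RInt (fun phi => RInt (fun theta => f (sph theta phi) * sin theta) 0 PI) 0 (2 * PI).

Fixpoint rprod (n : nat) (f : nat -> R) : R :=
  match n with O => 1 | S m => rprod m f * f m end.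

(* Put x_j = pi^-1 (z_j). The chordal distance is
     |x_i - x_j|^2 = 4 |z_i - z_j|^2 / ((1 + |z_i|^2) (1 + |z_j|^2))
   and |p_N'(z_i)|^2 = prod_(j <> i) |z_i - z_j|^2, so the energy and the sum of the
   log mu_norm are both affine in the numbers log |z_i - z_j| and log (1 + |z_j|^2), and the
   pairwise terms cancel in the difference. For the integral, write a point of the sphere in
   spherical coordinates (t, p) and set u = cos (t/2) e^(ip), v = sin (t/2): then
   |x - x_j|^2 = 4 |u - z_j v|^2 / (1 + |z_j|^2), so prod_j |x - x_j|^2 is
   prod_j 4 / (1 + |z_j|^2) times |P(u, v)|^2, P the homogenization of p_N. The monomials
   u^k v^(N-k) are orthogonal in p, and a Beta integral in t gives their squared norms
   k! (N-k)! / (N+1)!, i.e. 1 / ((N+1) binom(N,k)): the integral is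
   prod_j 4 / (1 + |z_j|^2) * ||p_N||^2 / (N + 1), with the Bombieri-Weyl norm. *)

From Stdlib Require Import Reals Lra Lia List ClassicalEpsilon Factorial.
From Coquelicot Require Import Coquelicot.
From Pilot Require Import Defs.
Open Scope R_scope.

Lemma Cx_ext (u v : Cx) : fst u = fst v -> snd u = snd v -> u = v.
Proof. destruct u, v; simpl; intros; subst; auto. Qed.

Ltac Cx_ring := apply Cx_ext; unfold Cadd, Csub, Cmul, Cscale, C0, C1; simpl; ring.

Lemma Cnorm2_mul u v : Cnorm2 (Cmul u v) = Cnorm2 u * Cnorm2 v.
Proof. unfold Cnorm2, Cmul; simpl; ring. Qed.

Lemma Cnorm2_ge0 u : 0 <= Cnorm2 u.
Proof. unfold Cnorm2; nra. Qed.

Lemma Cnorm2_gt0 u : u <> C0 -> 0 < Cnorm2 u.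
Proof.
  destruct u as [a b]; unfold Cnorm2, C0; simpl; intros Hu.
  destruct (Req_dec a 0), (Req_dec b 0); subst; [congruence | nra ..].
Qed.

Lemma Cnorm2_sub_gt0 u v : u <> v -> 0 < Cnorm2 (Csub u v).
Proof.
  intros Huv; apply Cnorm2_gt0; intros E; apply Huv.
  destruct u, v; unfold Csub, C0 in E; simpl in E; injection E; intros.
  f_equal; lra.
Qed.

Lemma one_add_Cnorm2_gt0 u : 0 < 1 + Cnorm2 u.
Proof. pose proof (Cnorm2_ge0 u); lra. Qed.

Lemma rsum_ext n f g : (forall i, (i < n)%nat -> f i = g i) -> rsum n f = rsum n g.
Proof.
  induction n; intros H; simpl; auto.
  rewrite IHn by (intros; apply H; lia). rewrite H by lia; auto.
Qed.

Lemma rprod_ext n f g : (forall i, (i < n)%nat -> f i = g i) -> rprod n f = rprod n g.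
Proof.
  induction n; intros H; simpl; auto.
  rewrite IHn by (intros; apply H; lia). rewrite H by lia; auto.
Qed.

Lemma rsumD n f g : rsum n (fun k => f k + g k) = rsum n f + rsum n g.
Proof. induction n; cbn [rsum]; [ring | rewrite IHn; ring]. Qed.

Lemma rsumB n f g : rsum n (fun k => f k - g k) = rsum n f - rsum n g.
Proof. induction n; cbn [rsum]; [ring | rewrite IHn; ring]. Qed.

Lemma rsum_scal n c f : rsum n (fun k => c * f k) = c * rsum n f.
Proof. induction n; cbn [rsum]; [ring | rewrite IHn; ring]. Qed.

Lemma rsum_const n c : rsum n (fun _ => c) = INR n * c.
Proof. induction n; cbn [rsum]; [simpl; ring | rewrite IHn, S_INR; ring]. Qed.

Lemma rsum_affine n a b c f g :
  rsum n (fun i => a + b * f i + c * g i) = INR n * a + b * rsum n f + c * rsum n g.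
Proof. rewrite !rsumD, !rsum_scal, rsum_const. ring. Qed.

Lemma rsumS_l n f : rsum (S n) f = f 0%nat + rsum n (fun k => f (S k)).
Proof. induction n; cbn [rsum] in *; [ring | rewrite IHn; ring]. Qed.

Lemma rsum_mul n f g : rsum n f * rsum n g = rsum n (fun k => rsum n (fun l => f k * g l)).
Proof.
  assert (M : forall G, rsum n f * G = rsum n (fun k => f k * G)).
  { intros G; induction n; cbn [rsum]; [ring | rewrite <- IHn; ring]. }
  rewrite M. apply rsum_ext; intros k _. rewrite rsum_scal; auto.
Qed.

Lemma rsum_delta n i f : (i < n)%nat -> rsum n (fun j => if Nat.eqb i j then f j else 0) = f i.
Proof.
  induction n; intros H; [lia |]. cbn [rsum]. destruct (Nat.eqb_spec i n).
  - subst. rewrite (rsum_ext n _ (fun _ => 0)), rsum_const; [ring |].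
    intros j Hj. destruct (Nat.eqb_spec n j); [lia | auto].
  - rewrite IHn by lia. ring.
Qed.

Lemma rsum_offdiag n c d g h :
  rsum n (fun i => rsum n (fun j => if Nat.eqb i j then 0 else c + g i + g j + d * h i j)) =
  INR n * (INR n - 1) * c + 2 * (INR n - 1) * rsum n g
  + d * rsum n (fun i => rsum n (fun j => if Nat.eqb i j then 0 else h i j)).
Proof.
  rewrite (rsum_ext n _ (fun i => (INR n - 1) * c + (INR n - 2) * g i + rsum n g
    + d * rsum n (fun j => if Nat.eqb i j then 0 else h i j))).
  - rewrite !rsumD, !rsum_scal, !rsum_const. ring.
  - intros i Hi.
    rewrite (rsum_ext n _ (fun j => (c + g i + g j + d * (if Nat.eqb i j then 0 else h i j))
                            - (if Nat.eqb i j then c + g i + g j else 0)))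
      by (intros j _; destruct (Nat.eqb i j); ring).
    rewrite rsumB, rsum_delta, !rsumD, !rsum_scal, !rsum_const by auto. ring.
Qed.

Lemma rsum_ge0 n f : (forall i, (i < n)%nat -> 0 <= f i) -> 0 <= rsum n f.
Proof.
  induction n; intros H; cbn [rsum]; [lra |].
  pose proof (H n ltac:(lia)). pose proof (IHn ltac:(intros; apply H; lia)). lra.
Qed.

Lemma rprod_mul n f g : rprod n (fun k => f k * g k) = rprod n f * rprod n g.
Proof. induction n; cbn [rprod]; [ring | rewrite IHn; ring]. Qed.

Lemma rprod_gt0 n f : (forall i, (i < n)%nat -> 0 < f i) -> 0 < rprod n f.
Proof.
  induction n; intros H; cbn [rprod]; [lra |].
  apply Rmult_lt_0_compat; [apply IHn; intros |]; apply H; lia.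
Qed.

Lemma ln_rprod n f : (forall i, (i < n)%nat -> 0 < f i) ->
  ln (rprod n f) = rsum n (fun i => ln (f i)).
Proof.
  induction n; intros H; cbn [rprod rsum]; [apply ln_1 |].
  rewrite ln_mult, IHn; auto; try (apply rprod_gt0; intros); apply H; lia.
Qed.

Lemma ln_sqrt x : 0 < x -> ln (sqrt x) = ln x / 2.
Proof.
  intros Hx. rewrite <- (sqrt_sqrt x) at 2 by lra.
  rewrite ln_mult by (apply sqrt_lt_R0; auto). field.
Qed.

Lemma ln_4 : ln 4 = 2 * ln 2.
Proof. replace 4 with (2 * 2) by ring. rewrite ln_mult by lra. ring. Qed.

Lemma Peval_mulXsub_aux z prev c w :
  Peval (mulXsub_aux z prev c) w = Cadd prev (Cmul (Csub w z) (Peval c w)).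
Proof.
  revert prev; induction c as [| a c IH]; intros prev; simpl; [| rewrite IH]; Cx_ring.
Qed.

Lemma Peval_mulXsub z c w : Peval (mulXsub z c) w = Cmul (Csub w z) (Peval c w).
Proof. unfold mulXsub. rewrite Peval_mulXsub_aux. Cx_ring. Qed.

Lemma Peval_deriv_auxS k c w :
  Peval (deriv_aux (S k) c) w = Cadd (Peval (deriv_aux k c) w) (Peval c w).
Proof.
  revert k; induction c as [| a c IH]; intros k; simpl; [Cx_ring |].
  rewrite IH. destruct k; simpl; Cx_ring.
Qed.

Lemma Peval_deriv_aux_mulXsub_aux k z prev c w :
  Peval (deriv_aux k (mulXsub_aux z prev c)) w =
  Cadd (Cscale (INR k) prev)
    (Csub (Cmul w (Peval (deriv_aux (S k) c) w)) (Cmul z (Peval (deriv_aux k c) w))).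
Proof.
  revert k prev; induction c as [| a c IH]; intros k prev; simpl; [Cx_ring |].
  rewrite IH, !S_INR. destruct k; simpl; Cx_ring.
Qed.

Lemma Peval_Pderiv_mulXsub z c w :
  Peval (Pderiv (mulXsub z c)) w =
  Cadd (Peval c w) (Cmul (Csub w z) (Peval (Pderiv c) w)).
Proof.
  destruct c as [| a c]; unfold Pderiv, mulXsub; simpl; [Cx_ring |].
  rewrite Peval_deriv_aux_mulXsub_aux, Peval_deriv_auxS. Cx_ring.
Qed.

Lemma length_mulXsub_aux z prev c : length (mulXsub_aux z prev c) = S (length c).
Proof. revert prev; induction c; intros; simpl; auto. Qed.

Lemma length_prod_roots N z : length (prod_roots N z) = S N.
Proof.
  induction N; simpl; auto. unfold mulXsub. rewrite length_mulXsub_aux. auto.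
Qed.

Lemma nth_last_mulXsub_aux z prev c : c <> nil ->
  nth (length c) (mulXsub_aux z prev c) C0 = nth (pred (length c)) c C0.
Proof.
  revert prev; induction c as [| a c IH]; intros prev H; [congruence |].
  destruct c as [| b c']; simpl; auto.
  exact (IH a ltac:(congruence)).
Qed.

Lemma lead_coef_prod_roots N z : nth N (prod_roots N z) C0 = C1.
Proof.
  induction N; simpl; auto. unfold mulXsub.
  pose proof (length_prod_roots N z) as HL.
  rewrite <- HL at 1. rewrite nth_last_mulXsub_aux, HL; auto.
  intros E; rewrite E in HL; discriminate.
Qed.

Notation coef N z k := (nth k (prod_roots N z) C0).

Lemma binomial_C_gt0 N k : 0 < Binomial.C N k.
Proof.
  unfold Binomial.C. apply Rdiv_lt_0_compat; [| apply Rmult_lt_0_compat]; apply INR_fact_lt_0.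
Qed.

Lemma bw_norm_prod_roots_sq N z :
  bw_norm N (prod_roots N z) ^ 2 = rsum (S N) (fun k => Cnorm2 (coef N z k) / Binomial.C N k).
Proof.
  unfold bw_norm. rewrite pow2_sqrt; auto.
  apply rsum_ge0; intros. apply Rdiv_le_0_compat; [apply Cnorm2_ge0 | apply binomial_C_gt0].
Qed.

Lemma bw_norm_prod_roots_gt0 N z : 0 < bw_norm N (prod_roots N z).
Proof.
  unfold bw_norm. apply sqrt_lt_R0. cbn [rsum]. rewrite lead_coef_prod_roots.
  assert (0 <= rsum N (fun i => Cnorm2 (coef N z i) / Binomial.C N i)).
  { apply rsum_ge0; intros. apply Rdiv_le_0_compat; [apply Cnorm2_ge0 | apply binomial_C_gt0]. }
  assert (0 < Cnorm2 C1 / Binomial.C N N).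
  { apply Rdiv_lt_0_compat; [unfold Cnorm2, C1; simpl; lra | apply binomial_C_gt0]. }
  lra.
Qed.

Lemma Peval_prod_roots_root N z i : (i < N)%nat -> Peval (prod_roots N z) (z i) = C0.
Proof.
  induction N; intros H; [lia |]. simpl. rewrite Peval_mulXsub.
  destruct (Nat.eq_dec i N) as [-> |]; [| rewrite IHN by lia]; Cx_ring.
Qed.

Lemma Cnorm2_Peval_prod_roots N z w :
  Cnorm2 (Peval (prod_roots N z) w) = rprod N (fun j => Cnorm2 (Csub w (z j))).
Proof.
  induction N; simpl.
  - unfold Cnorm2, C1, C0, Cadd, Cmul; simpl; ring.
  - rewrite Peval_mulXsub, Cnorm2_mul, IHN; ring.
Qed.

Lemma Cnorm2_Pderiv_prod_roots_root N z i : (i < N)%nat ->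
  Cnorm2 (Peval (Pderiv (prod_roots N z)) (z i)) =
  rprod N (fun j => if Nat.eqb i j then 1 else Cnorm2 (Csub (z i) (z j))).
Proof.
  induction N; intros H; [lia |]. simpl. rewrite Peval_Pderiv_mulXsub.
  destruct (Nat.eq_dec i N) as [-> | HiN].
  - rewrite Nat.eqb_refl, Rmult_1_r.
    replace (Cadd _ _) with (Peval (prod_roots N z) (z N)) by Cx_ring.
    rewrite Cnorm2_Peval_prod_roots. apply rprod_ext.
    intros j Hj. destruct (Nat.eqb_spec N j); [lia | auto].
  - rewrite Peval_prod_roots_root by lia.
    replace (Cadd C0 _) with (Cmul (Csub (z i) (z N)) (Peval (Pderiv (prod_roots N z)) (z i)))
      by Cx_ring.
    rewrite Cnorm2_mul, IHN by lia.
    destruct (Nat.eqb_spec i N); [lia | ring].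
Qed.

(** * Homogenization *)

Fixpoint Cpow (u : Cx) (n : nat) : Cx :=
  match n with O => C1 | S m => Cmul u (Cpow u m) end.

Definition Csum (n : nat) (f : nat -> Cx) : Cx :=
  (rsum n (fun k => fst (f k)), rsum n (fun k => snd (f k))).

Lemma CsumS_l n f : Csum (S n) f = Cadd (f 0%nat) (Csum n (fun k => f (S k))).
Proof. unfold Csum, Cadd. rewrite !rsumS_l. reflexivity. Qed.

Lemma Cmul_Csum u n f : Cmul u (Csum n f) = Csum n (fun k => Cmul u (f k)).
Proof.
  unfold Csum, Cmul; cbn [fst snd]. f_equal.
  - rewrite <- !rsum_scal, <- rsumB. apply rsum_ext; intros; cbn [fst snd]; ring.
  - rewrite <- !rsum_scal, <- rsumD. apply rsum_ext; intros; cbn [fst snd]; ring.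
Qed.

Lemma Csum_ext n f g : (forall k, (k < n)%nat -> f k = g k) -> Csum n f = Csum n g.
Proof. intros H; unfold Csum; f_equal; apply rsum_ext; intros; rewrite H; auto. Qed.

Lemma Cpow_polar r t k :
  Cpow (r * cos t, r * sin t) k = (r ^ k * cos (INR k * t), r ^ k * sin (INR k * t)).
Proof.
  induction k; cbn [Cpow].
  - simpl INR. rewrite Rmult_0_l, cos_0, sin_0. unfold C1. f_equal; ring.
  - rewrite IHk, S_INR. unfold Cmul; cbn [fst snd].
    replace ((INR k + 1) * t) with (t + INR k * t) by ring.
    rewrite cos_plus, sin_plus. simpl pow. f_equal; ring.
Qed.

Lemma Cpow_real s n : Cpow (s, 0) n = (s ^ n, 0).
Proof.
  induction n; cbn [Cpow]; auto. rewrite IHn. unfold Cmul; cbn [fst snd]. simpl pow.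
  f_equal; ring.
Qed.

Fixpoint Phom (p : list Cx) (u v : Cx) : Cx :=
  match p with
  | nil => C0
  | a :: p' => Cadd (Cmul a (Cpow v (length p'))) (Cmul u (Phom p' u v))
  end.

Lemma Phom_Csum p u v : Phom p u v =
  Csum (length p) (fun k => Cmul (nth k p C0) (Cmul (Cpow u k) (Cpow v (length p - 1 - k)))).
Proof.
  induction p as [| a p IH]; cbn [Phom length]; [reflexivity |].
  rewrite IH, CsumS_l, Cmul_Csum. f_equal.
  - replace (S (length p) - 1 - 0)%nat with (length p) by lia. cbn [nth Cpow]. Cx_ring.
  - apply Csum_ext; intros k Hk.
    replace (S (length p) - 1 - S k)%nat with (length p - 1 - k)%nat by lia.
    cbn [nth Cpow]. Cx_ring.
Qed.

Lemma Phom_mulXsub_aux z prev c u v :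
  Phom (mulXsub_aux z prev c) u v =
  Cadd (Cmul prev (Cpow v (length c))) (Cmul (Csub u (Cmul z v)) (Phom c u v)).
Proof.
  revert prev; induction c as [| a c IH]; intros prev; simpl; [Cx_ring |].
  rewrite length_mulXsub_aux, IH. simpl. Cx_ring.
Qed.

Lemma Cnorm2_Phom_prod_roots N z u v :
  Cnorm2 (Phom (prod_roots N z) u v) = rprod N (fun j => Cnorm2 (Csub u (Cmul (z j) v))).
Proof.
  induction N; simpl.
  - unfold Cnorm2; simpl; ring.
  - unfold mulXsub. rewrite Phom_mulXsub_aux.
    replace (Cadd _ _) with (Cmul (Csub u (Cmul (z N) v)) (Phom (prod_roots N z) u v))
      by Cx_ring.
    rewrite Cnorm2_mul, IHN. ring.
Qed.

(** * Stereographic projection *)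

Definition stereo_inv (z : Cx) : R3 :=
  (2 * fst z / (1 + Cnorm2 z), 2 * snd z / (1 + Cnorm2 z), (Cnorm2 z - 1) / (Cnorm2 z + 1)).

Lemma stereoK x : on_sphere x -> x <> (0, 0, 1) -> stereo_inv (stereo x) = x.
Proof.
  destruct x as [[a b] c]; unfold on_sphere, stereo, stereo_inv, Cnorm2; cbn [fst snd].
  intros Hs Hn.
  assert (Hc : c < 1).
  { destruct (Rlt_dec c 1); auto. exfalso.
    assert (c = 1) by nra. assert (a = 0) by nra. assert (b = 0) by nra.
    subst; apply Hn; auto. }
  assert (E : (a / (1 - c)) ^ 2 + (b / (1 - c)) ^ 2 = (1 + c) / (1 - c)).
  { replace ((a / (1 - c)) ^ 2 + (b / (1 - c)) ^ 2) with ((a ^ 2 + b ^ 2) / (1 - c) ^ 2)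
      by (field; lra).
    replace (a ^ 2 + b ^ 2) with (1 - c ^ 2) by lra. field; lra. }
  rewrite E. f_equal; [f_equal |]; field; lra.
Qed.

Lemma dist3_sq x y : dist3 x y ^ 2 =
  let '(a, b, c) := x in let '(a', b', c') := y in (a - a') ^ 2 + (b - b') ^ 2 + (c - c') ^ 2.
Proof.
  destruct x as [[a b] c], y as [[a' b'] c']; unfold dist3.
  rewrite pow2_sqrt; auto.
  pose proof (pow2_ge_0 (a - a')); pose proof (pow2_ge_0 (b - b')); pose proof (pow2_ge_0 (c - c')).
  lra.
Qed.

Lemma dist3_ge0 x y : 0 <= dist3 x y.
Proof. destruct x as [[? ?] ?], y as [[? ?] ?]; unfold dist3; apply sqrt_pos. Qed.

Lemma dist3_stereo_inv z w :
  dist3 (stereo_inv z) (stereo_inv w) ^ 2 =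
  4 * Cnorm2 (Csub z w) / ((1 + Cnorm2 z) * (1 + Cnorm2 w)).
Proof.
  rewrite dist3_sq. unfold stereo_inv. destruct z as [p q], w as [r s].
  unfold Cnorm2, Csub; cbn [fst snd]. field. split; nra.
Qed.

(* With [u = cos(t/2) e^(i p)] and [v = sin(t/2)], the point [sph t p] is the image of
   [u/v], and its chordal distance to the image of [z] is [2 |u - z v| / sqrt (1 + |z|^2)]. *)
Lemma dist3_sph_stereo_inv z t p :
  dist3 (sph t p) (stereo_inv z) ^ 2 =
  4 / (1 + Cnorm2 z) *
  Cnorm2 (Csub (cos (t / 2) * cos p, cos (t / 2) * sin p) (Cmul z (sin (t / 2), 0))).
Proof.
  rewrite dist3_sq. unfold sph, stereo_inv.
  assert (Hsin : sin t = 2 * sin (t / 2) * cos (t / 2))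
    by (replace t with (2 * (t / 2)) at 1 by field; apply sin_2a).
  assert (Hcos : cos t = cos (t / 2) ^ 2 - sin (t / 2) ^ 2)
    by (replace t with (2 * (t / 2)) at 1 by field; rewrite cos_2a; ring).
  rewrite Hsin, Hcos.
  pose proof (sin2_cos2 (t / 2)) as H1. pose proof (sin2_cos2 p) as H2. unfold Rsqr in *.
  set (c := cos (t / 2)) in *. set (s := sin (t / 2)) in *.
  set (C := cos p) in *. set (S := sin p) in *. clearbody c s C S.
  destruct z as [zx zy]. unfold Cnorm2, Csub, Cmul; cbn [fst snd].
  assert (HD : 1 + (zx ^ 2 + zy ^ 2) <> 0) by nra.
  match goal with |- ?L = ?R =>
    assert (E : L - R = (c ^ 2 + s ^ 2 - 1) ^ 2
                        + (C ^ 2 + S ^ 2 - 1) * (4 * s ^ 2 * c ^ 2 - 4 * c ^ 2 / (1 + (zx ^ 2 + zy ^ 2))))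
      by (field; auto)
  end.
  replace (c ^ 2 + s ^ 2 - 1) with 0 in E by nra.
  replace (C ^ 2 + S ^ 2 - 1) with 0 in E by nra.
  lra.
Qed.

(** * Beta and Fourier integrals *)

Lemma RInt_is_RInt f a b v : is_RInt f a b v -> Defs.RInt f a b = v.
Proof.
  intros H. unfold Defs.RInt.
  destruct (epsilon_spec (inhabits 0)
     (fun I => exists pr : Riemann_integrable f a b, RiemannInt pr = I)) as [pr Hpr].
  { pose proof (ex_RInt_Reals_0 f a b (ex_intro _ v H)) as pr. exists (RiemannInt pr), pr; auto. }
  rewrite <- Hpr, <- RInt_Reals. apply is_RInt_unique; auto.
Qed.

Lemma is_RInt_Rplus (f g : R -> R) a b u v :
  is_RInt f a b u -> is_RInt g a b v -> is_RInt (fun x => f x + g x) a b (u + v).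
Proof. apply (is_RInt_plus f g). Qed.

Lemma is_RInt_Rscal (f : R -> R) a b k u :
  is_RInt f a b u -> is_RInt (fun x => k * f x) a b (k * u).
Proof. apply (is_RInt_scal f). Qed.

Lemma is_RInt_Rext (f g : R -> R) a b v :
  (forall x, f x = g x) -> is_RInt f a b v -> is_RInt g a b v.
Proof. intros H; apply is_RInt_ext; intros; auto. Qed.

Lemma is_RInt_Rconst a b v : is_RInt (fun _ => v) a b ((b - a) * v).
Proof. apply (is_RInt_const a b v). Qed.

Lemma is_RInt_rsum n (f : nat -> R -> R) a b (v : nat -> R) :
  (forall k, (k < n)%nat -> is_RInt (f k) a b (v k)) ->
  is_RInt (fun x => rsum n (fun k => f k x)) a b (rsum n v).
Proof.
  induction n; intros H; cbn [rsum].
  - pose proof (is_RInt_Rconst a b 0) as H0; rewrite Rmult_0_r in H0; exact H0.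
  - apply is_RInt_Rplus; [apply IHn; intros |]; apply H; lia.
Qed.

Lemma is_RInt_derive_R (F f : R -> R) a b :
  (forall x, is_derive F x (f x)) -> (forall x, ex_derive f x) ->
  is_RInt f a b (F b - F a).
Proof.
  intros HF Hf. apply (is_RInt_derive F f); intros; auto.
  apply (ex_derive_continuous (K := R_AbsRing) (V := R_NormedModule)); auto.
Qed.

Definition half_angle_mono (k m : nat) (t : R) : R := cos (t / 2) ^ k * sin (t / 2) ^ m.

Lemma sin_half_angle t : sin t = 2 * sin (t / 2) * cos (t / 2).
Proof. replace t with (2 * (t / 2)) at 1 by field. apply sin_2a. Qed.

Lemma is_RInt_beta_base k :
  is_RInt (fun t => half_angle_mono k 0 t * half_angle_mono k 0 t * sin t) 0 PI (2 / (INR k + 1)).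
Proof.
  assert (Hk : INR k + 1 <> 0) by (pose proof (pos_INR k); lra).
  set (h := fun t => - (2 / (INR k + 1)) * cos (t / 2) ^ (k + k + 2)).
  replace (2 / (INR k + 1)) with (h PI - h 0).
  2:{ unfold h. replace (0 / 2) with 0 by field.
      rewrite cos_PI2, cos_0, pow1, pow_i by lia. field; auto. }
  apply is_RInt_derive_R.
  - intros t. unfold h, half_angle_mono. auto_derive; auto.
    replace (Init.Nat.pred (k + k + 2)) with (k + k + 1)%nat by lia.
    rewrite (sin_half_angle t), !pow_add, !plus_INR. simpl. unfold Rdiv. field; auto.
  - intros t. unfold half_angle_mono. auto_derive; auto.
Qed.

(* Integration by parts: differentiate [cos (t/2) ^ (2k+2) * sin (t/2) ^ (2m+2)]. *)
Lemma is_RInt_beta_step k m v :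
  is_RInt (fun t => half_angle_mono (S k) m t * half_angle_mono (S k) m t * sin t) 0 PI v ->
  is_RInt (fun t => half_angle_mono k (S m) t * half_angle_mono k (S m) t * sin t) 0 PI
    ((INR m + 1) / (INR k + 1) * v).
Proof.
  intros Hv.
  assert (Hk : INR k + 1 <> 0) by (pose proof (pos_INR k); lra).
  set (g := fun t => cos (t / 2) ^ (k + k + 2) * sin (t / 2) ^ (m + m + 2)).
  assert (Hg : is_RInt (fun t =>
      - (INR k + 1) / 2 * (half_angle_mono k (S m) t * half_angle_mono k (S m) t * sin t)
      + (INR m + 1) / 2 * (half_angle_mono (S k) m t * half_angle_mono (S k) m t * sin t))
      0 PI (g PI - g 0)).
  { apply is_RInt_derive_R.
    - intros t. unfold g, half_angle_mono. auto_derive; auto.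
      replace (Init.Nat.pred (k + k + 2)) with (k + k + 1)%nat by lia.
      replace (Init.Nat.pred (m + m + 2)) with (m + m + 1)%nat by lia.
      rewrite (sin_half_angle t), !pow_add, !plus_INR. simpl. unfold Rdiv. field.
    - intros t. unfold half_angle_mono. auto_derive; auto. }
  replace (g PI - g 0) with 0 in Hg.
  2:{ unfold g. replace (0 / 2) with 0 by field. rewrite cos_PI2, sin_0, !pow_i by lia. ring. }
  pose proof (is_RInt_Rplus _ _ _ _ _ _ (is_RInt_Rscal _ _ _ ((INR m + 1) / (INR k + 1)) _ Hv)
               (is_RInt_Rscal _ _ _ (- (2 / (INR k + 1))) _ Hg)) as H.
  replace ((INR m + 1) / (INR k + 1) * v) with
    ((INR m + 1) / (INR k + 1) * v + - (2 / (INR k + 1)) * 0) by ring.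
  revert H. apply is_RInt_Rext. intros t. field. auto.
Qed.

Lemma is_RInt_beta k m :
  is_RInt (fun t => half_angle_mono k m t * half_angle_mono k m t * sin t) 0 PI
    (2 * INR (fact k) * INR (fact m) / INR (fact (k + m + 1))).
Proof.
  revert k; induction m; intros k.
  - replace (k + 0 + 1)%nat with (S k) by lia. rewrite fact_simpl, mult_INR, S_INR.
    replace (2 * INR (fact k) * INR (fact 0) / ((INR k + 1) * INR (fact k)))
      with (2 / (INR k + 1)).
    + apply is_RInt_beta_base.
    + simpl. field. split; [apply INR_fact_neq_0 | pose proof (pos_INR k); lra].
  - pose proof (is_RInt_beta_step k m _ (IHm (S k))) as H.
    replace (S k + m + 1)%nat with (k + S m + 1)%nat in H by lia.
    match type of H with is_RInt _ _ _ ?a => replace (2 * _ * _ / _) with a; auto end.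
    rewrite !fact_simpl, !mult_INR, !S_INR. field.
    split; [apply INR_fact_neq_0 | pose proof (pos_INR k); lra].
Qed.

Definition rotate (a : Cx) (k : nat) (t : R) : Cx := Cmul a (cos (INR k * t), sin (INR k * t)).

(* [Re (a e^(ikt) * conj (b e^(ilt)))]. *)
Definition fourier_pair (a b : Cx) (k l : nat) (t : R) : R :=
  fst (rotate a k t) * fst (rotate b l t) + snd (rotate a k t) * snd (rotate b l t).

Lemma fourier_pairE a b k l t : fourier_pair a b k l t =
  (fst a * fst b + snd a * snd b) * cos ((INR k - INR l) * t)
  + (fst a * snd b - snd a * fst b) * sin ((INR k - INR l) * t).
Proof.
  unfold fourier_pair, rotate, Cmul; cbn [fst snd].
  replace ((INR k - INR l) * t) with (INR k * t - INR l * t) by ring.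
  rewrite cos_minus, sin_minus. ring.
Qed.

Lemma is_RInt_fourier_pair a b k l : is_RInt (fourier_pair a b k l) 0 (2 * PI)
  (if Nat.eqb k l then 2 * PI * (fst a * fst b + snd a * snd b) else 0).
Proof.
  set (A := fst a * fst b + snd a * snd b).
  set (B := fst a * snd b - snd a * fst b).
  destruct (Nat.eqb_spec k l) as [<- | Hkl].
  - apply (is_RInt_Rext (fun _ => A)).
    + intros t. rewrite fourier_pairE, Rminus_diag, Rmult_0_l, cos_0, sin_0. unfold A; ring.
    + pose proof (is_RInt_Rconst 0 (2 * PI) A) as H. rewrite Rminus_0_r in H. exact H.
  - set (m := INR k - INR l).
    assert (Hm : m <> 0) by (unfold m; intros E; apply Hkl, INR_eq; lra).
    set (F := fun t => (A * sin (m * t) - B * cos (m * t)) / m).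
    assert (Hper : F (2 * PI) - F 0 = 0).
    { unfold F. rewrite Rmult_0_r, sin_0, cos_0.
      replace (m * (2 * PI)) with (0 + 2 * INR k * PI - (0 + 2 * INR l * PI)) by (unfold m; ring).
      rewrite sin_minus, cos_minus, !sin_period, !cos_period, sin_0, cos_0. field; auto. }
    assert (H : is_RInt (fourier_pair a b k l) 0 (2 * PI) (F (2 * PI) - F 0)).
    2:{ rewrite Hper in H. exact H. }
    apply is_RInt_derive_R.
    + intros t. unfold F. auto_derive; auto.
      rewrite fourier_pairE. unfold A, B, m. field; auto.
    + intros t. unfold fourier_pair, rotate, Cmul. cbn [fst snd]. auto_derive; auto.
Qed.

(** * The integral over the sphere *)

Definition theta_mono (N k l : nat) (t : R) : R :=
  half_angle_mono k (N - k) t * half_angle_mono l (N - l) t * sin t.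

Definition theta_moment (N k l : nat) : R := Coquelicot.RInt.RInt (theta_mono N k l) 0 PI.

Lemma is_RInt_theta_moment N k l : is_RInt (theta_mono N k l) 0 PI (theta_moment N k l).
Proof.
  apply (RInt_correct (V := R_CompleteNormedModule)).
  apply (ex_RInt_continuous (V := R_CompleteNormedModule)). intros t _.
  apply (ex_derive_continuous (K := R_AbsRing) (V := R_NormedModule)).
  unfold theta_mono, half_angle_mono. auto_derive. auto.
Qed.

Lemma theta_moment_diag N k : (k <= N)%nat ->
  theta_moment N k k = 2 / ((INR N + 1) * Binomial.C N k).
Proof.
  intros Hk. apply is_RInt_unique.
  replace (2 / _) with (2 * INR (fact k) * INR (fact (N - k)) / INR (fact (k + (N - k) + 1))).
  - apply is_RInt_beta.
  - replace (k + (N - k) + 1)%nat with (S N) by lia.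
    unfold Binomial.C. rewrite fact_simpl, mult_INR, S_INR.
    pose proof (INR_fact_neq_0 k). pose proof (INR_fact_neq_0 (N - k)).
    pose proof (INR_fact_neq_0 N). pose proof (pos_INR N).
    field. repeat split; lra.
Qed.

Definition stereo_weight (N : nat) (z : nat -> Cx) : R :=
  rprod N (fun j => 4 / (1 + Cnorm2 (z j))).

(* The product is [stereo_weight * |P(u, v)|^2] for the homogenization [P]; expanding [|P|^2]
   in monomials separates the variables [t] and [p]. *)
Lemma prod_dist3_sph_expansion N z t p :
  rprod N (fun j => dist3 (sph t p) (stereo_inv (z j)) ^ 2) * sin t =
  stereo_weight N z * rsum (S N) (fun k => rsum (S N) (fun l =>
    fourier_pair (coef N z k) (coef N z l) k l p * theta_mono N k l t)).
Proof.
  rewrite (rprod_ext _ _ (fun j => 4 / (1 + Cnorm2 (z j)) *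
    Cnorm2 (Csub (cos (t / 2) * cos p, cos (t / 2) * sin p) (Cmul (z j) (sin (t / 2), 0)))))
    by (intros; apply dist3_sph_stereo_inv).
  rewrite rprod_mul, <- Cnorm2_Phom_prod_roots, Phom_Csum, length_prod_roots, Rmult_assoc.
  fold (stereo_weight N z). f_equal.
  unfold Cnorm2, Csum; cbn [fst snd]. rewrite <- !Rsqr_pow2. unfold Rsqr.
  rewrite !rsum_mul, <- rsumD, Rmult_comm, <- rsum_scal. apply rsum_ext; intros k Hk.
  rewrite <- rsumD, <- rsum_scal. apply rsum_ext; intros l Hl.
  rewrite !Cpow_polar, !Cpow_real.
  replace (S N - 1 - k)%nat with (N - k)%nat by lia.
  replace (S N - 1 - l)%nat with (N - l)%nat by lia.
  unfold fourier_pair, rotate, Cmul, theta_mono, half_angle_mono; cbn [fst snd]. ring.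
Qed.

Definition phi_integrand (N : nat) (z : nat -> Cx) (p : R) : R :=
  stereo_weight N z * rsum (S N) (fun k => rsum (S N) (fun l =>
    fourier_pair (coef N z k) (coef N z l) k l p * theta_moment N k l)).

Lemma RInt_theta_prod_dist3 N z x p :
  (forall j, (j < N)%nat -> x j = stereo_inv (z j)) ->
  RInt (fun t => rprod N (fun j => dist3 (sph t p) (x j) ^ 2) * sin t) 0 PI = phi_integrand N z p.
Proof.
  intros Hx. apply RInt_is_RInt.
  apply (is_RInt_Rext (fun t => stereo_weight N z * rsum (S N) (fun k => rsum (S N) (fun l =>
           fourier_pair (coef N z k) (coef N z l) k l p * theta_mono N k l t)))).
  { intros t. rewrite (rprod_ext _ _ (fun j => dist3 (sph t p) (stereo_inv (z j)) ^ 2))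
      by (intros j Hj; rewrite Hx; auto).
    symmetry. apply prod_dist3_sph_expansion. }
  apply is_RInt_Rscal, (is_RInt_rsum (S N) (fun k t => rsum (S N) (fun l =>
    fourier_pair (coef N z k) (coef N z l) k l p * theta_mono N k l t))); intros k _.
  apply (is_RInt_rsum (S N) (fun l t =>
    fourier_pair (coef N z k) (coef N z l) k l p * theta_mono N k l t)); intros l _.
  apply is_RInt_Rscal, is_RInt_theta_moment.
Qed.

Lemma is_RInt_phi_integrand N z : is_RInt (phi_integrand N z) 0 (2 * PI)
  (4 * PI * stereo_weight N z * bw_norm N (prod_roots N z) ^ 2 / (INR N + 1)).
Proof.
  set (target := stereo_weight N z * rsum (S N) (fun k => rsum (S N) (fun l =>
    (if Nat.eqb k l then 2 * PI * Cnorm2 (coef N z k) else 0) * theta_moment N k l))).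
  replace (4 * PI * _ * _ / _) with target.
  - apply is_RInt_Rscal, (is_RInt_rsum (S N) (fun k p => rsum (S N) (fun l =>
      fourier_pair (coef N z k) (coef N z l) k l p * theta_moment N k l))); intros k _.
    apply (is_RInt_rsum (S N) (fun l p =>
      fourier_pair (coef N z k) (coef N z l) k l p * theta_moment N k l)); intros l _.
    apply (is_RInt_Rext (fun p => theta_moment N k l * fourier_pair (coef N z k) (coef N z l) k l p));
      [intros; ring |].
    match goal with |- is_RInt _ _ _ (?A * ?B) => rewrite (Rmult_comm A B) end.
    apply is_RInt_Rscal.
    generalize (is_RInt_fourier_pair (coef N z k) (coef N z l) k l).
    destruct (Nat.eqb_spec k l) as [<- | _]; auto.
    unfold Cnorm2. rewrite <- !Rsqr_pow2. auto.
  - pose proof (pos_INR N). unfold target. rewrite bw_norm_prod_roots_sq.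
    rewrite (rsum_ext (S N) _ (fun k => 4 * PI / (INR N + 1) * (Cnorm2 (coef N z k) / Binomial.C N k))).
    + rewrite rsum_scal. field. lra.
    + intros k Hk. pose proof (binomial_C_gt0 N k).
      rewrite (rsum_ext (S N) _ (fun l => if Nat.eqb k l
                 then 2 * PI * Cnorm2 (coef N z k) * theta_moment N k l else 0))
        by (intros l _; destruct (Nat.eqb k l); ring).
      rewrite rsum_delta, theta_moment_diag by lia. field. lra.
Qed.

Lemma sphere_int_prod_dist_stereo N z x :
  (forall j, (j < N)%nat -> x j = stereo_inv (z j)) ->
  sphere_int (fun p => rprod N (fun j => dist3 p (x j) ^ 2)) =
  stereo_weight N z * bw_norm N (prod_roots N z) ^ 2 / (INR N + 1).
Proof.
  intros Hx. unfold sphere_int.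
  rewrite (RInt_is_RInt _ 0 (2 * PI) _ (is_RInt_Rext (phi_integrand N z) _ _ _ _
             (fun p => eq_sym (RInt_theta_prod_dist3 N z x p Hx)) (is_RInt_phi_integrand N z))).
  pose proof PI_RGT_0. pose proof (pos_INR N). field. split; lra.
Qed.

Lemma ln_dist3_stereo_inv z w : z <> w ->
  ln (dist3 (stereo_inv z) (stereo_inv w)) =
  (ln 4 + ln (Cnorm2 (Csub z w)) - ln (1 + Cnorm2 z) - ln (1 + Cnorm2 w)) / 2.
Proof.
  intros Hzw.
  pose proof (Cnorm2_sub_gt0 _ _ Hzw). pose proof (one_add_Cnorm2_gt0 z).
  pose proof (one_add_Cnorm2_gt0 w). pose proof (dist3_stereo_inv z w) as Hd.
  pose proof (dist3_ge0 (stereo_inv z) (stereo_inv w)).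
  set (d := dist3 (stereo_inv z) (stereo_inv w)) in *.
  assert (Hd2 : 0 < d ^ 2).
  { rewrite Hd. apply Rdiv_lt_0_compat; [lra | apply Rmult_lt_0_compat; lra]. }
  assert (Hdpos : 0 < d) by (destruct (Req_dec d 0) as [E |]; [rewrite E in Hd2; simpl in Hd2 |]; lra).
  replace (ln d) with (ln (d ^ 2) / 2) by (rewrite ln_pow by auto; simpl INR; field).
  rewrite Hd, ln_div, !ln_mult by (try apply Rmult_lt_0_compat; lra). field.
Qed.

Lemma ln_mu_norm_prod_roots N z i :
  (forall j, (j < N)%nat -> j <> i -> z i <> z j) -> (i < N)%nat ->
  ln (mu_norm N (prod_roots N z) (z i)) =
  ln (INR N) / 2 + ln (bw_norm N (prod_roots N z)) + (INR N / 2 - 1) * ln (1 + Cnorm2 (z i))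
  - rsum N (fun j => if Nat.eqb i j then 0 else ln (Cnorm2 (Csub (z i) (z j)))) / 2.
Proof.
  intros Hdist Hi. unfold mu_norm, Cnorm.
  assert (Hfac : forall j, (j < N)%nat ->
    0 < (if Nat.eqb i j then 1 else Cnorm2 (Csub (z i) (z j)))).
  { intros j Hj. destruct (Nat.eqb_spec i j); [lra |].
    apply Cnorm2_sub_gt0, Hdist; auto. }
  rewrite (Cnorm2_Pderiv_prod_roots_root N z i Hi).
  pose proof (rprod_gt0 _ _ Hfac). pose proof (bw_norm_prod_roots_gt0 N z).
  assert (0 < INR N) by (apply lt_0_INR; lia).
  assert (0 < Rpower (1 + Cnorm2 (z i)) (INR N / 2 - 1)) by apply exp_pos.
  assert (0 < sqrt (INR N)) by (apply sqrt_lt_R0; auto).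
  rewrite ln_div, !ln_mult, !ln_sqrt, ln_rprod by
    (auto; try apply sqrt_lt_R0; repeat apply Rmult_lt_0_compat; auto).
  unfold Rpower. rewrite ln_exp.
  rewrite (rsum_ext N _ (fun j => if Nat.eqb i j then 0 else ln (Cnorm2 (Csub (z i) (z j)))))
    by (intros j _; destruct (Nat.eqb i j); auto using ln_1).
  ring.
Qed.

Lemma E_log_stereo_inv N z x :
  (forall i j, (i < N)%nat -> (j < N)%nat -> i <> j -> z i <> z j) ->
  (forall j, (j < N)%nat -> x j = stereo_inv (z j)) ->
  E_log N x =
  - (INR N * (INR N - 1)) * ln 2 + (INR N - 1) * rsum N (fun j => ln (1 + Cnorm2 (z j)))
  - rsum N (fun i => rsum N (fun j =>
      if Nat.eqb i j then 0 else ln (Cnorm2 (Csub (z i) (z j))))) / 2.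
Proof.
  intros Hdist Hx. unfold E_log.
  rewrite (rsum_ext N _ (fun i => rsum N (fun j => if Nat.eqb i j then 0 else
    ln 4 / 2 + - / 2 * ln (1 + Cnorm2 (z i)) + - / 2 * ln (1 + Cnorm2 (z j))
    + / 2 * ln (Cnorm2 (Csub (z i) (z j)))))).
  - rewrite rsum_offdiag, rsum_scal, ln_4. field.
  - intros i Hi. apply rsum_ext; intros j Hj.
    destruct (Nat.eqb_spec i j); auto.
    rewrite !Hx, ln_dist3_stereo_inv by auto. field.
Qed.

Lemma ln_stereo_weight N z :
  ln (stereo_weight N z) = INR N * ln 4 - rsum N (fun j => ln (1 + Cnorm2 (z j))).
Proof.
  pose proof one_add_Cnorm2_gt0.
  unfold stereo_weight. rewrite ln_rprod by (intros; apply Rdiv_lt_0_compat; auto; lra).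
  rewrite (rsum_ext N _ (fun j => ln 4 - ln (1 + Cnorm2 (z j))))
    by (intros; apply ln_div; auto; lra).
  rewrite rsumB, rsum_const. ring.
Qed.

Theorem lemma3p3 (N : nat) (z : nat -> Cx) (x : nat -> R3)
  (Hdist : forall i j, (i < N)%nat -> (j < N)%nat -> i <> j -> z i <> z j)
  (Hsph : forall i, (i < N)%nat -> on_sphere (x i))
  (Hnp : forall i, (i < N)%nat -> x i <> (0, 0, 1))
  (Hproj : forall i, (i < N)%nat -> stereo (x i) = z i) :
  E_log N x - rsum N (fun i => ln (mu_norm N (prod_roots N z) (z i)))
  = - INR N * ln (sqrt (INR N * (INR N + 1)) / 2)
    - INR N * ln (sqrt (sphere_int
                          (fun p => rprod N (fun j => dist3 p (x j) ^ 2)))).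
Proof.
  destruct (Nat.eq_dec N 0) as [-> | HN]; [unfold E_log; simpl; ring |].
  assert (Hx : forall j, (j < N)%nat -> x j = stereo_inv (z j))
    by (intros j Hj; rewrite <- Hproj, stereoK; auto).
  set (L := fun j => ln (1 + Cnorm2 (z j))).
  set (D := fun i => rsum N (fun j => if Nat.eqb i j then 0 else ln (Cnorm2 (Csub (z i) (z j))))).
  set (B := bw_norm N (prod_roots N z)).
  rewrite (rsum_ext N _ (fun i => (ln (INR N) / 2 + ln B) + (INR N / 2 - 1) * L i + (- / 2) * D i)).
  2:{ intros i Hi. rewrite ln_mu_norm_prod_roots; auto. unfold L, D, B. lra. }
  rewrite rsum_affine, (E_log_stereo_inv N z x), (sphere_int_prod_dist_stereo N z x) by auto.
  fold B. assert (HB : 0 < B) by apply bw_norm_prod_roots_gt0.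
  assert (HNpos : 0 < INR N) by (apply lt_0_INR; lia).
  assert (HW : 0 < stereo_weight N z)
    by (apply rprod_gt0; intros; apply Rdiv_lt_0_compat; [lra | apply one_add_Cnorm2_gt0]).
  rewrite ln_div, ln_sqrt, ln_mult, ln_sqrt, ln_div, ln_mult, ln_pow, ln_stereo_weight, ln_4
    by (repeat first [lra | apply sqrt_lt_R0 | apply Rdiv_lt_0_compat
                      | apply Rmult_lt_0_compat | apply pow_lt]).
  unfold L, D. simpl INR. field.
Qed.
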